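(* Let $k\ge2$ and $\ell\ge0$. Among all stable configurations reachable by labeled chip-firing from $k^\ell$ chips labeled $1,\dots,k^\ell$ at the root of the infinite rooted directed $k$-ary tree (viewed as permutations of $\{1,\dots,k^\ell\}$), the permutation $Z_k(\ell)$ has the maximum number of inversions, and this maximum number of inversions is $$\frac{k^{2\ell}-\ell k^{\ell+1}+(\ell-1)k^{\ell}}{4}.$$
   Context: Labeled chip-firing on the infinite rooted directed $k$-ary tree (each vertex has $k$ children ordered left to right, root on layer $1$): a vertex with at least $k$ chips may fire by choosing any $k$ of its chips and sending the $i$-th smallest label among them to its $i$-th leftmost child; a configuration is stable when no vertex has $\ge k$ chips. Starting with $k^\ell$ chips at the root, every stable configuration has exactly one chip on each vertex of layer $\ell+1$ and none elsewhere, and is identified with the permutation of labels read left to right on layer $\ell+1$. $Z_k(\ell)$ is the stable configuration obtained by the strategy in which every vertex on layers $1,\dots,\ell$, holding chips $c_1<\cdots<c_{kq}$, fires the $k$-tuples of consecutive chips $(c_1,\dots,c_k),(c_{k+1},\dots,c_{2k}),\dots$ in sorted order; equivalently, its $p$-th entry is $1+\mathrm{rev}_{k,\ell}(p-1)$, where $\mathrm{rev}_{k,\ell}$ reverses the $\ell$-digit (zero-padded) base-$k$ representation. An inversion of a permutation $\pi$ is a pair $i<j$ with $\pi_i>\pi_j$. *)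

From Stdlib Require Import Relations.
From mathcomp Require Import all_boot all_order all_algebra.
Set Implicit Arguments. Unset Strict Implicit. Unset Printing Implicit Defensive.

(* Vertices of the infinite rooted k-ary tree: a vertex is the sequence of
   child indices (each in 0..k-1) on the path from the root; the root is [::],
   and the i-th leftmost child (i = 1..k) of v is rcons v (i-1).
   A vertex v lies on layer (size v).+1. *)
Definition vertex := seq nat.

(* Chips are labelled 1..k^l; chip with label a+1 is represented by a : 'I_(k^l).
   A configuration records, for each chip, the vertex it sits on. *)
Definition config (k l : nat) := 'I_(k ^ l) -> vertex.

Definition init_config (k l : nat) : config k l := fun _ => [::].

(* One firing: at vertex v, choose k chips s (listed in increasing label
   order, hence distinct) all sitting at v; the chip of i-th smallest label
   (i = 1..k, index i-1 in s) goes to the i-th leftmost child of v. *)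
Definition fire_step (k l : nat) (c c' : config k l) : Prop :=
  exists (v : vertex) (s : seq 'I_(k ^ l)),
    [/\ size s = k, sorted ltn (map val s), all (fun i => c i == v) s &
        forall j, c' j = if j \in s then rcons v (index j s) else c j].

Definition reachable (k l : nat) (c : config k l) : Prop :=
  clos_refl_trans (config k l) (@fire_step k l) (@init_config k l) c.

Definition stable (k l : nat) (c : config k l) : Prop :=
  forall v : vertex, #|[pred i : 'I_(k ^ l) | c i == v]| < k.

(* The vertex in position p (0-indexed, left to right) of layer l+1:
   the l-digit base-k expansion of p, most significant digit first. *)
Definition layer_vertex (k l p : nat) : vertex :=
  [seq (p %/ k ^ (l.-1 - j)) %% k | j <- iota 0 l].

(* The label of the chip on vertex v (0 if there is none). *)
Definition label_at (k l : nat) (c : config k l) (v : vertex) : nat :=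
  if [pick i : 'I_(k ^ l) | c i == v] is Some i then (val i).+1 else 0.

Definition perm_of (k l : nat) (c : config k l) : seq nat :=
  mkseq (fun p => label_at c (layer_vertex k l p)) (k ^ l).

Definition inversions (s : seq nat) : nat :=
  #|[set ij : 'I_(size s) * 'I_(size s) |
      (ij.1 < ij.2) && (nth 0 s ij.2 < nth 0 s ij.1)]|.

Definition rev_digits (k l n : nat) : nat :=
  \sum_(j < l) ((n %/ k ^ j) %% k) * k ^ (l.-1 - j).

Definition Z (k l : nat) : seq nat :=
  mkseq (fun q => (rev_digits k l q).+1) (k ^ l).

From Stdlib Require Import Relations FunctionalExtensionality.
From mathcomp Require Import all_boot all_order all_algebra.
From mathcomp Require Import zify ring.
Import GRing.Theory Num.Theory.

(* The strategy Z_k(l) sends the chip with label a+1 to the vertex spelled by the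
   base-k digits of a, least significant first, that is, to position
   rev_{k,l}(a) of layer l+1.  Up to the shift by 1, the reading of that layer for
   n+1 is the concatenation of the k blocks k * (reading for n) + i, i < k, any two
   of which cross in exactly C(k^n, 2) pairs; hence the inversion count obeys
   I(n+1) = k I(n) + C(k, 2) C(k^n, 2).

   For the upper bound, every firing preserves two properties of each vertex v:
   the subtrees below the children of v hold equally many chips, and for i < j
   the subtree of child j holds at most as many chips of label <= x as the
   subtree of child i holds of label < x.  In a stable configuration the first
   forces exactly one chip on each vertex of layer l+1; the second bounds the
   cross-inversions between the readings of two sibling subtrees by C(k^n, 2),
   so any reachable stable reading obeys the same recursion as an inequality. *)

Set Implicit Arguments.
Unset Strict Implicit.
Unset Printing Implicit Defensive.

(** * Base-k digits *)

Lemma digit_mulexp_add k n i r j : 0 < k -> j < n ->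
  ((i * k ^ n + r) %/ k ^ j) %% k = (r %/ k ^ j) %% k.
Proof.
move=> k0 jn.
have -> : k ^ n = (k ^ (n - j).-1 * k) * k ^ j.
  by rewrite -expnSr prednK ?subn_gt0 // -expnD subnK // ltnW.
by rewrite mulnA divnMDl ?expn_gt0 ?k0 // mulnA modnMDl.
Qed.

Lemma split_top_digit k n p : 0 < k -> p < k ^ n.+1 ->
  exists i r, [/\ i < k, r < k ^ n & p = i * k ^ n + r].
Proof.
move=> k0 hp; exists (p %/ k ^ n), (p %% k ^ n); split; last exact: divn_eq.
  by rewrite ltn_divLR ?expn_gt0 ?k0 // -expnS.
by rewrite ltn_mod expn_gt0 k0.
Qed.

Lemma layer_vertex_cons k n i r : 0 < k -> i < k -> r < k ^ n ->
  layer_vertex k n.+1 (i * k ^ n + r) = i :: layer_vertex k n r.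
Proof.
move=> k0 ik rn; rewrite /layer_vertex /= subn0.
rewrite divnMDl ?expn_gt0 ?k0 // divn_small // addn0 modn_small //; congr (_ :: _).
rewrite -[1]addn0 iotaDl -map_comp; apply/eq_in_map => j; rewrite mem_iota => /andP[_ jn].
rewrite /= (_ : n - (1 + j) = n.-1 - j); last by lia.
by apply: digit_mulexp_add => //; lia.
Qed.

Lemma layer_vertex_size k n p : size (layer_vertex k n p) = n.
Proof. by rewrite /layer_vertex size_map size_iota. Qed.

Lemma layer_vertex_digits_lt k n p : 0 < k -> all (fun d => d < k) (layer_vertex k n p).
Proof. by move=> k0; apply/allP => d /mapP[j _ ->]; rewrite ltn_mod. Qed.

Lemma layer_vertex_inj k n p q : 0 < k -> p < k ^ n -> q < k ^ n ->
  layer_vertex k n p = layer_vertex k n q -> p = q.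
Proof.
move=> k0; elim: n p q => [|n IH] p q.
  by rewrite expn0 !ltnS !leqn0 => /eqP-> /eqP->.
move=> /(split_top_digit k0) [i [r [ik rn ->]]] /(split_top_digit k0) [j [r' [jk rn' ->]]].
by rewrite !layer_vertex_cons // => -[-> /IH ->].
Qed.

Lemma layer_vertex_surj k (u : vertex) : 0 < k -> all (fun d => d < k) u ->
  exists2 p, p < k ^ size u & layer_vertex k (size u) p = u.
Proof.
move=> k0; elim: u => [|d u IH] /=; first by exists 0.
case/andP=> dk /IH [p hp e].
exists (d * k ^ size u + p); last by rewrite layer_vertex_cons // e.
rewrite expnS; have : d.+1 * k ^ size u <= k * k ^ size u by rewrite leq_mul2r dk orbT.
by rewrite mulSn; lia.
Qed.

Lemma rev_digits_cons k n i r : 0 < k -> i < k -> r < k ^ n ->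
  rev_digits k n.+1 (i * k ^ n + r) = k * rev_digits k n r + i.
Proof.
move=> k0 ik rn; rewrite /rev_digits big_ord_recr /= subnn expn0 muln1.
rewrite divnMDl ?expn_gt0 ?k0 // divn_small // addn0 modn_small //; congr (_ + _).
rewrite big_distrr /=; apply: eq_bigr => j _ /=.
rewrite digit_mulexp_add //; have -> : n - j = (n.-1 - j).+1 by have := ltn_ord j; lia.
by rewrite expnS mulnCA.
Qed.

(* Least significant digit first: [digits k l a] is the vertex on which the
   consecutive-tuple strategy places chip [a]. *)
Definition digits k n a : vertex := [seq (a %/ k ^ j) %% k | j <- iota 0 n].

Lemma digits_cons k n a : digits k n.+1 a = a %% k :: digits k n (a %/ k).
Proof.
rewrite /digits /= expn0 divn1; congr (_ :: _).
rewrite (iotaDl 1 0) -map_comp; apply: eq_map => j /=.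
by rewrite add1n expnS divnMA.
Qed.

Lemma digits_rcons k n a : digits k n.+1 a = rcons (digits k n a) ((a %/ k ^ n) %% k).
Proof. by rewrite /digits -addn1 iotaD map_cat /= cats1. Qed.

Lemma digits_modexp k n a : digits k n (a %% k ^ n) = digits k n a.
Proof.
apply/eq_in_map => j; rewrite mem_iota => /andP[_ jn] /=.
rewrite !modn_divl; congr (_ %/ _).
by rewrite -expnS modn_dvdm // dvdn_exp2l.
Qed.

Lemma digits_inj k n a b : 0 < k -> a < k ^ n -> b < k ^ n ->
  digits k n a = digits k n b -> a = b.
Proof.
move=> k0; elim: n a b => [|n IH] a b.
  by rewrite expn0 !ltnS !leqn0 => /eqP-> /eqP->.
have hq x : x < k ^ n.+1 -> x %/ k < k ^ n by move=> hx; rewrite ltn_divLR // -expnSr.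
rewrite !digits_cons => ha hb [e1 /IH e2].
by rewrite (divn_eq a k) (divn_eq b k) e1 e2 ?hq.
Qed.

Lemma rev_digits_lt k n p : 0 < k -> p < k ^ n -> rev_digits k n p < k ^ n.
Proof.
move=> k0; elim: n p => [|n IH] p; first by rewrite /rev_digits big_ord0.
move=> /(split_top_digit k0) [i [r [ik rn ->]]]; rewrite rev_digits_cons // expnS.
apply: leq_trans (_ : k * (rev_digits k n r).+1 <= _); last by rewrite leq_mul2l IH ?orbT.
by rewrite mulnS addnC ltn_add2r.
Qed.

Lemma digits_rev_digits k n p : 0 < k -> p < k ^ n ->
  digits k n (rev_digits k n p) = layer_vertex k n p.
Proof.
move=> k0; elim: n p => [|n IH] p // /(split_top_digit k0) [i [r [ik rn ->]]].
rewrite rev_digits_cons // layer_vertex_cons // digits_cons mulnC.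
by rewrite modnMDl modn_small // divnMDl // (divn_small ik) addn0 IH.
Qed.

Lemma rev_digits_inj k n p q : 0 < k -> p < k ^ n -> q < k ^ n ->
  rev_digits k n p = rev_digits k n q -> p = q.
Proof.
move=> k0 hp hq e; apply: (layer_vertex_inj k0 hp hq).
by rewrite -!digits_rev_digits // e.
Qed.

(** * Inversions of concatenations *)

Fixpoint invs (s : seq nat) : nat :=
  if s is x :: s' then count (fun y => y < x) s' + invs s' else 0.

Definition cross (s t : seq nat) : nat := \sum_(x <- s) count (fun y => y < x) t.

Lemma count_sum T (a : pred T) s : count a s = \sum_(y <- s) (a y : nat).
Proof. by rewrite -sum1_count big_mkcond. Qed.

Lemma count_ord (s : seq nat) (a : pred nat) :
  count a s = \sum_(j < size s) (a (nth 0 s j) : nat).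
Proof.
elim: s => [|x s IH]; first by rewrite big_ord0.
by rewrite /= big_ord_recl /= IH.
Qed.

Lemma inversions_invs s : inversions s = invs s.
Proof.
rewrite /inversions cardsE -sum1_card big_mkcond /=.
rewrite (eq_bigr (fun ij : 'I_(size s) * 'I_(size s) =>
   ((ij.1 < ij.2) && (nth 0 s ij.2 < nth 0 s ij.1) : nat))); last first.
  by move=> ij _; rewrite unfold_in /=; case: ifP.
rewrite -(pair_bigA _ (fun i j : 'I_(size s) => ((i < j) && (nth 0 s j < nth 0 s i) : nat))) /=.
elim: s => [|x s IH]; first by rewrite big_ord0.
rewrite /= big_ord_recl /= big_ord_recl /= add0n -IH count_ord; congr (_ + _).
by apply: eq_bigr => i _; rewrite big_ord_recl.
Qed.

Lemma invs_cat s t : invs (s ++ t) = invs s + invs t + cross s t.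
Proof.
elim: s => [|x s IH]; first by rewrite /cross big_nil addn0.
by rewrite /= IH count_cat /cross big_cons; lia.
Qed.

Lemma cross_flatten s ts : cross s (flatten ts) = \sum_(t <- ts) cross s t.
Proof.
elim: ts => [|t ts IH]; first by rewrite big_nil /cross big1.
by rewrite big_cons /= -IH /cross -big_split; apply: eq_bigr => x _; rewrite count_cat.
Qed.

Lemma sum_seq_le_const (T : eqType) (s : seq T) (F : T -> nat) c :
  (forall y, y \in s -> F y <= c) -> \sum_(y <- s) F y <= size s * c.
Proof.
elim: s => [|x s IH] h; first by rewrite big_nil.
rewrite big_cons mulSn leq_add ?h ?mem_head // IH // => y hy.
by rewrite h // inE hy orbT.
Qed.

Lemma sum_seq_eq_const (T : eqType) (s : seq T) (F : T -> nat) c :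
  (forall y, y \in s -> F y = c) -> \sum_(y <- s) F y = size s * c.
Proof.
elim: s => [|x s IH] h; first by rewrite big_nil.
rewrite big_cons mulSn h ?mem_head // IH // => y hy.
by rewrite h // inE hy orbT.
Qed.

Lemma invs_flatten_le ts F X :
  all (fun t => invs t <= F) ts -> pairwise (fun s t => cross s t <= X) ts ->
  invs (flatten ts) <= size ts * F + 'C(size ts, 2) * X.
Proof.
elim: ts => [|t ts IH] //= /andP[tF tsF] /andP[/allP tX tsX].
have : \sum_(u <- ts) cross t u <= size ts * X by apply: sum_seq_le_const.
rewrite invs_cat cross_flatten binS bin1 mulSn mulnDl.
by have := IH tsF tsX; lia.
Qed.

Lemma invs_flatten_eq ts F X :
  all (fun t => invs t == F) ts -> pairwise (fun s t => cross s t == X) ts ->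
  invs (flatten ts) = size ts * F + 'C(size ts, 2) * X.
Proof.
elim: ts => [|t ts IH] //= /andP[/eqP tF tsF] /andP[/allP tX tsX].
have : \sum_(u <- ts) cross t u = size ts * X by apply: sum_seq_eq_const => u /tX /eqP.
rewrite invs_cat cross_flatten binS bin1 mulSn mulnDl tF IH //.
by lia.
Qed.

Lemma bin2_double m : 'C(m, 2) * 2 + m = m * m.
Proof. by elim: m => [|m IH] //; rewrite binS bin1; nia. Qed.

Lemma cross_sum_gtn s t : cross s t = \sum_(y <- t) count (fun x => y < x) s.
Proof.
rewrite /cross; under eq_bigr => x _ do rewrite count_sum.
by rewrite exchange_big /=; apply: eq_bigr => y _; rewrite count_sum.
Qed.

Lemma count_ltn_gtn_eq x s :
  count (fun y => y < x) s + count (fun y => x < y) s + count (fun y => y == x) s = size s.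
Proof.
elim: s => [|y s IH] //=; case: (ltngtP y x) => h /=; rewrite -IH.
all: set a := count _ s; set b := count _ s; set c := count _ s; simpl nat_of_bool; lia.
Qed.

Lemma count_leq_ltn_eq x s :
  count (fun y => y <= x) s = count (fun y => y < x) s + count (fun y => y == x) s.
Proof.
by elim: s => [|y s IH] //=; rewrite IH; case: (ltngtP y x) => h /=; lia.
Qed.

Lemma cross_self s : uniq s -> cross s s = 'C(size s, 2).
Proof.
move=> us.
have : cross s s + cross s s = size s * (size s).-1.
  rewrite {2}cross_sum_gtn /cross -big_split /=; apply: sum_seq_eq_const => x xs.
  have := count_ltn_gtn_eq x s; have := count_uniq_mem x us; rewrite xs /= => ->; lia.
by have := bin2_double (size s); nia.
Qed.

(* Summed over [y] in [t], the hypothesis gives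
   [cross s t <= m * m - \sum_(y <- t) count (<= y) t = m * m - ('C(m, 2) + m)]. *)
Lemma cross_le_bin2 s t m : size s = m -> size t = m -> uniq t ->
  (forall x, count (fun y => y <= x) t <= count (fun y => y < x) s) ->
  cross s t <= 'C(m, 2).
Proof.
move=> ss st ut H.
have hT : \sum_(y <- t) count (fun z => z <= y) t = 'C(m, 2) + m.
  under eq_bigr => y _ do rewrite count_leq_ltn_eq.
  rewrite big_split /= -/(cross t t) cross_self // st; congr (_ + _).
  rewrite -st -[size t]muln1; apply: sum_seq_eq_const => y yt.
  by have := count_uniq_mem y ut; rewrite yt.
have : cross s t + \sum_(y <- t) count (fun z => z <= y) t <= m * m.
  rewrite cross_sum_gtn -big_split /= -{1}st; apply: sum_seq_le_const => y _.
  by have := count_ltn_gtn_eq y s; have := H y; lia.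
by have := bin2_double m; lia.
Qed.

Lemma mkseqD (T : Type) (g : nat -> T) a b :
  mkseq g (a + b) = mkseq g a ++ mkseq (fun r => g (a + r)) b.
Proof.
rewrite /mkseq iotaD map_cat; congr (_ ++ _).
by rewrite add0n -[a]addn0 iotaDl -map_comp addn0.
Qed.

Lemma mkseq_blocks (T : Type) (g : nat -> T) K n : mkseq g (n * K) =
  flatten [seq mkseq (fun r => g (i * K + r)) K | i <- iota 0 n].
Proof.
elim: n => [|n IH] //.
by rewrite mulSnr mkseqD IH -addn1 iotaD map_cat flatten_cat /= cats0.
Qed.

Lemma pairwise_iota_ltn (r : rel nat) m n :
  {in gtn (m + n) &, forall i j, i < j -> r i j} -> pairwise r (iota m n).
Proof.
move=> h; apply: (sub_in_pairwise (P := gtn (m + n)) (r := ltn)) => [i j ? ?||].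
- exact: h.
- by apply/allP => i; rewrite mem_iota /= => /andP[].
- by rewrite -sorted_pairwise ?iota_ltn_sorted //; apply: ltn_trans.
Qed.

Lemma invs_map f s : {mono f : x y / x < y} -> invs (map f s) = invs s.
Proof.
move=> h; elim: s => [|x s IH] //=; rewrite IH count_map; congr (_ + _).
by apply: eq_count => y /=.
Qed.

Lemma cross_map f g s t : (forall x y, (g y < f x) = (y < x)) ->
  cross (map f s) (map g t) = cross s t.
Proof.
move=> h; rewrite /cross big_map; apply: eq_bigr => x _; rewrite count_map.
by apply: eq_count => y /=.
Qed.

(** * The inversions of Z_k(l) *)

Definition rev_digits_seq k n := mkseq (rev_digits k n) (k ^ n).

Lemma rev_digits_seq_succ k n : 0 < k -> rev_digits_seq k n.+1 =
  flatten [seq map (fun x => k * x + i) (rev_digits_seq k n) | i <- iota 0 k].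
Proof.
move=> k0; rewrite /rev_digits_seq expnS mkseq_blocks; congr flatten.
apply/eq_in_map => i; rewrite mem_iota add0n => /andP[_ ik].
rewrite /mkseq -map_comp; apply/eq_in_map => r; rewrite mem_iota => /andP[_ rk] /=.
by rewrite rev_digits_cons.
Qed.

Lemma rev_digits_seq_uniq k n : 0 < k -> uniq (rev_digits_seq k n).
Proof.
move=> k0; rewrite /rev_digits_seq /mkseq map_inj_in_uniq ?iota_uniq // => p q.
by rewrite !mem_iota /= => hp hq; apply: rev_digits_inj.
Qed.

Fixpoint Z_inversions k n :=
  if n is n'.+1 then k * Z_inversions k n' + 'C(k, 2) * 'C(k ^ n', 2) else 0.

Lemma invs_rev_digits_seq k n : 0 < k -> invs (rev_digits_seq k n) = Z_inversions k n.
Proof.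
move=> k0; elim: n => [|n IH]; first by rewrite /rev_digits_seq expn0.
rewrite rev_digits_seq_succ // (invs_flatten_eq (F := Z_inversions k n) (X := 'C(k ^ n, 2))).
- by rewrite size_map size_iota.
- apply/allP => _ /mapP[i _ ->]; rewrite invs_map ?IH // => x y.
  by rewrite ltn_add2r ltn_pmul2l.
rewrite pairwise_map; apply: pairwise_iota_ltn => i j; rewrite !inE add0n => _ jk ij /=.
rewrite cross_map ?cross_self ?rev_digits_seq_uniq ?size_mkseq // => x y.
by case: (ltnP y x) => h; [apply/idP | apply/negbTE; rewrite -leqNgt]; nia.
Qed.

Lemma Z_inversions_closed_form k n : ((Z_inversions k n)%:R * 4 : rat)%R =
  ((k%:R ^+ n) ^+ 2 - n%:R * (k%:R ^+ n * k%:R) + (n%:R - 1) * k%:R ^+ n)%R.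
Proof.
have bin m : ('C(m, 2)%:R * 2 : rat)%R = (m%:R * m%:R - m%:R)%R.
  by have := congr1 (fun x => x%:R : rat) (bin2_double m); rewrite /= natrD !natrM => <-; ring.
elim: n => [|n IH]; first by rewrite /= expr0; ring.
rewrite /= natrD !natrM.
transitivity (k%:R * ((Z_inversions k n)%:R * 4)
  + ('C(k, 2)%:R * 2) * ('C(k ^ n, 2)%:R * 2) : rat)%R.
  by ring.
by rewrite IH !bin natrX -[n.+1]addn1 natrD exprD expr1; ring.
Qed.

(** * Reachability of Z_k(l) *)

Definition delete_digit k t a := a %% k ^ t + k ^ t * (a %/ k ^ t.+1).

Definition insert_digit k t d u := u %% k ^ t + d * k ^ t + u %/ k ^ t * k ^ t.+1.

Section DigitSurgery.

Variables (k t : nat).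
Hypothesis k0 : 0 < k.

Let K0 : 0 < k ^ t. Proof. by rewrite expn_gt0 k0. Qed.

Lemma insert_digit_modexp d u : insert_digit k t d u %% k ^ t = u %% k ^ t.
Proof.
have -> : insert_digit k t d u = (u %/ k ^ t * k + d) * k ^ t + u %% k ^ t.
  by rewrite /insert_digit expnSr mulnDl -mulnA [k * _]mulnC; lia.
by rewrite modnMDl modn_mod.
Qed.

Lemma delete_insert_digit d u : d < k -> delete_digit k t (insert_digit k t d u) = u.
Proof.
move=> dk; rewrite /delete_digit insert_digit_modexp.
have low : u %% k ^ t + d * k ^ t < k ^ t.+1.
  have : d.+1 * k ^ t <= k * k ^ t by rewrite leq_mul2r dk orbT.
  by have := ltn_pmod u K0; rewrite expnS; nia.
have -> : insert_digit k t d u %/ k ^ t.+1 = u %/ k ^ t.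
  by rewrite /insert_digit addnC divnMDl ?expn_gt0 ?k0 // (divn_small low) addn0.
by rewrite addnC mulnC -divn_eq.
Qed.

Lemma delete_digit_modexp a : delete_digit k t a %% k ^ t = a %% k ^ t.
Proof. by rewrite /delete_digit addnC mulnC modnMDl modn_mod. Qed.

Lemma delete_digit_divexp a : delete_digit k t a %/ k ^ t = a %/ k ^ t.+1.
Proof. by rewrite /delete_digit mulnC divnDMl // divn_small ?ltn_pmod. Qed.

Lemma insert_delete_digit a :
  insert_digit k t ((a %/ k ^ t) %% k) (delete_digit k t a) = a.
Proof.
rewrite /insert_digit delete_digit_modexp delete_digit_divexp expnSr divnMA.
by have := divn_eq (a %/ k ^ t) k; have := divn_eq a (k ^ t); nia.
Qed.

Lemma insert_digit_leq2r u : {mono insert_digit k t ^~ u : d e / d <= e}.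
Proof. by move=> d e; rewrite /insert_digit leq_add2r leq_add2l leq_pmul2r. Qed.

Lemma insert_digit_lt m d u : t <= m -> d < k -> u < k ^ m ->
  insert_digit k t d u < k ^ m.+1.
Proof.
move=> tm dk um.
have ekm : k ^ m = k ^ t * k ^ (m - t) by rewrite -expnD subnKC.
have q : u %/ k ^ t < k ^ (m - t) by rewrite ltn_divLR // mulnC -ekm.
have : (u %/ k ^ t).+1 * k ^ t.+1 <= k ^ (m - t) * k ^ t.+1 by rewrite leq_mul2r q orbT.
have : d.+1 * k ^ t <= k * k ^ t by rewrite leq_mul2r dk orbT.
have := ltn_pmod u K0.
by rewrite /insert_digit !expnSr ekm; nia.
Qed.

Lemma delete_digit_lt m a : t <= m -> a < k ^ m.+1 -> delete_digit k t a < k ^ m.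
Proof.
move=> tm am.
have ekm : k ^ m.+1 = k ^ t.+1 * k ^ (m - t) by rewrite -expnD addSn subnKC.
have q : a %/ k ^ t.+1 < k ^ (m - t) by rewrite ltn_divLR ?expn_gt0 ?k0 // mulnC -ekm.
have : (a %/ k ^ t.+1).+1 * k ^ t <= k ^ (m - t) * k ^ t by rewrite leq_mul2r q orbT.
have := ltn_pmod a K0.
by rewrite /delete_digit -(subnKC tm) expnD; nia.
Qed.

Lemma digits_delete_digit a : digits k t (delete_digit k t a) = digits k t a.
Proof. by rewrite -digits_modexp delete_digit_modexp digits_modexp. Qed.

End DigitSurgery.

Lemma map_val_pmap_insub N (s : seq nat) : all (gtn N) s ->
  map val (pmap (insub : nat -> option 'I_N) s) = s.
Proof. by elim: s => [|x s IH] //= /andP[hx hs]; rewrite insubT /= IH. Qed.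

(* Stage [t] of the consecutive-tuple strategy fires, for [u = 0, 1, ...], the
   batch [[pred a | delete_digit k t a == u]]: [k] chips sitting together on
   vertex [digits k t u], consecutive in label order there, and distinguished by
   their [t]-th digit.  [stage_config k l t u] is the configuration once the
   first [u] batches of stage [t] are fired. *)
Definition stage_config k l t u : config k l :=
  fun a => if delete_digit k t a < u then digits k t.+1 a else digits k t a.
Arguments stage_config : clear implicits.

Lemma stage_config_step k l t u : 0 < k -> t < l -> u < k ^ l.-1 ->
  fire_step (stage_config k l t u) (stage_config k l t u.+1).
Proof.
move=> k0 tl ul.
have el : k ^ l = k ^ l.-1.+1 by rewrite prednK //; lia.
pose s := pmap (insub : nat -> option 'I_(k ^ l)) [seq insert_digit k t d u | d <- iota 0 k].
have val_s : map val s = [seq insert_digit k t d u | d <- iota 0 k].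
  apply: map_val_pmap_insub; apply/allP => x /mapP[d]; rewrite mem_iota /= => dk ->.
  by rewrite el insert_digit_lt //; lia.
have mem_s (j : 'I_(k ^ l)) : (j \in s) = (delete_digit k t j == u).
  rewrite -(mem_map val_inj) val_s; apply/mapP/eqP => [[d]|<-].
    by rewrite mem_iota => /andP[_ dk] ->; rewrite delete_insert_digit.
  by exists ((j %/ k ^ t) %% k); rewrite ?mem_iota ?ltn_mod ?insert_delete_digit.
have index_s (j : 'I_(k ^ l)) : j \in s -> index j s = (j %/ k ^ t) %% k.
  rewrite mem_s => /eqP dj; rewrite -(index_map val_inj) val_s.
  have -> : val j = insert_digit k t ((j %/ k ^ t) %% k) u by rewrite -dj insert_delete_digit.
  rewrite (index_map (incn_inj (insert_digit_leq2r t k0 u))).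
  have dk : (j %/ k ^ t) %% k < k by rewrite ltn_mod.
  by rewrite -{1}[_ %% k](nth_iota 0 0 dk) index_uniq ?size_iota ?iota_uniq.
have at_u (j : 'I_(k ^ l)) : j \in s -> digits k t j = digits k t u.
  by rewrite mem_s => /eqP <-; rewrite digits_delete_digit.
exists (digits k t u), s; split.
- by rewrite -(size_map val) val_s size_map size_iota.
- rewrite val_s (homo_sorted (f := insert_digit k t ^~ u) (e := ltn)) ?iota_ltn_sorted //.
  by move=> d e /=; rewrite (leqW_mono (insert_digit_leq2r t k0 u)).
- apply/allP => j js; rewrite /stage_config at_u //.
  by move: js; rewrite mem_s => /eqP ->; rewrite ltnn.
- move=> j; rewrite /stage_config ltnS leq_eqVlt -mem_s; case js: (j \in s) => //=.
  by rewrite digits_rcons index_s // at_u.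
Qed.

Lemma stage_config_reach k l t u : 0 < k -> t < l -> u <= k ^ l.-1 ->
  clos_refl_trans (config k l) (@fire_step k l) (stage_config k l t 0) (stage_config k l t u).
Proof.
move=> k0 tl; elim: u => [|u IH] hu; first exact: rt_refl.
apply: rt_trans (IH (ltnW hu)) (rt_step _ _ _ _ _).
exact: stage_config_step.
Qed.

Lemma reachable_digits k l t : 0 < k -> t <= l -> reachable (fun a : 'I_(k ^ l) => digits k t a).
Proof.
move=> k0; elim: t => [|t IH] tl.
  have -> : (fun a : 'I_(k ^ l) => digits k 0 a) = @init_config k l by [].
  exact: rt_refl.
have stage_start : stage_config k l t 0 = (fun a => digits k t a).
  by apply: functional_extensionality => a.
have stage_end : stage_config k l t (k ^ l.-1) = (fun a => digits k t.+1 a).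
  apply: functional_extensionality => a; rewrite /stage_config delete_digit_lt //; first by lia.
  by rewrite prednK ?ltn_ord //; lia.
apply: rt_trans (IH (ltnW tl)) _; rewrite -stage_start -stage_end.
exact: stage_config_reach.
Qed.

(** * An invariant of firing *)

Lemma prefix_rconsr (x w : vertex) j :
  prefix x (rcons w j) = prefix x w || (x == rcons w j).
Proof. by elim: w x => [|b w IH] [|a x] //=; rewrite IH eqseq_cons andb_orr. Qed.

Lemma prefix_rcons_self (w : vertex) i : prefix (rcons w i) w = false.
Proof. by apply/negbTE/negP => /size_prefix; rewrite size_rcons ltnn. Qed.

Lemma count_predU_disjoint T (X Y : pred T) s : (forall a, ~~ (X a && Y a)) ->
  count (fun a => X a || Y a) s = count X s + count Y s.
Proof.
move=> h; rewrite -count_predUI (eq_count (a1 := predI X Y) (a2 := pred0)) ?count_pred0 ?addn0 //.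
by move=> a /=; apply/negbTE.
Qed.

Lemma count_enum_eq N (b : bool) (e : 'I_N) (P : pred 'I_N) :
  count (fun a => b && (a == e) && P a) (enum 'I_N) = b && P e.
Proof.
case: b => /=; last by rewrite (eq_count (a2 := pred0)) ?count_pred0.
case Pe: (P e).
  rewrite (eq_count (a2 := pred1 e)) ?count_uniq_mem ?enum_uniq ?mem_enum //.
  by move=> a /=; case: eqP => // ->.
by rewrite (eq_count (a2 := pred0)) ?count_pred0 // => a /=; case: eqP => // ->.
Qed.

Definition subtree_count k l (c : config k l) (w : vertex) (P : pred 'I_(k ^ l)) :=
  count (fun a => prefix w (c a) && P a) (enum 'I_(k ^ l)).

Lemma subtree_count_fire k l (c c' : config k l) w s a0 :
  size s = k -> sorted ltn (map val s) -> all (fun i => c i == w) s ->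
  (forall j, c' j = if j \in s then rcons w (index j s) else c j) ->
  forall v i P, subtree_count c' (rcons v i) P =
     subtree_count c (rcons v i) P + ((v == w) && (i < k) && P (nth a0 s i)).
Proof.
move=> ss so al hc' v i P.
have us : uniq s by rewrite -(map_inj_uniq val_inj); apply: (sorted_uniq ltn_trans ltnn).
rewrite /subtree_count -count_enum_eq -count_predU_disjoint; last first.
  move=> a; case vw: (v == w); case ik: (i < k); rewrite /= ?andbF //.
  case: eqP => [->|_]; rewrite ?andbF //.
  by move/eqP: vw => ->; rewrite (eqP (allP al _ (mem_nth a0 _))) ?ss // prefix_rcons_self.
apply: eq_count => a /=; rewrite hc'; case: ifP => ha.
  have /eqP ca := allP al a ha.
  have key : (i == index a s) = (i < k) && (a == nth a0 s i).
    apply/eqP/andP => [->|[ik /eqP ->]]; last by rewrite index_uniq // ss.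
    by split; [move: (index_mem a s); rewrite ss ha | apply/eqP/esym/nth_index].
  rewrite prefix_rconsr eqseq_rcons ca andb_orl key.
  by case: (v == w); rewrite /= ?andbA.
case: (v == w) => /=; last by rewrite orbF.
case ik: (i < k) => /=; last by rewrite orbF.
have -> : (a == nth a0 s i) = false by apply/negbTE/eqP => e; move: ha; rewrite e mem_nth // ss.
by rewrite /= orbF.
Qed.

Record firing_invariant k l (c : config k l) : Prop := FiringInvariant {
  chips_in_tree : forall a, all (fun d => d < k) (c a);
  siblings_balanced : forall v i, i < k ->
    subtree_count c (rcons v i) xpredT = subtree_count c (rcons v 0) xpredT;
  siblings_dominated : forall v i j x, i < j -> j < k ->
    subtree_count c (rcons v j) (fun a => val a <= x) <=
    subtree_count c (rcons v i) (fun a => val a < x) }.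

Lemma firing_invariant_init k l : firing_invariant (@init_config k l).
Proof.
have h v i P : subtree_count (@init_config k l) (rcons v i) P = 0.
  by rewrite /subtree_count (eq_count (a2 := pred0)) ?count_pred0 // => a; case: v.
by split=> // [v i _|v i j x _ _]; rewrite !h.
Qed.

(* Firing adds one chip to the subtree of each child, and sends larger labels
   to the right; this preserves both balance and domination. *)
Lemma firing_invariant_step k l (c c' : config k l) : 0 < k ->
  fire_step c c' -> firing_invariant c -> firing_invariant c'.
Proof.
move=> k0 [w [s [ss so al hc']]] [in_tree balanced dominated].
have k0l : 0 < k ^ l by rewrite expn_gt0 k0.
pose a0 : 'I_(k ^ l) := Ordinal k0l.
have hf := subtree_count_fire a0 ss so al hc'.
split.
- move=> a; rewrite hc'; case: ifP => ha; last exact: in_tree.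
  rewrite all_rcons; have /eqP <- := allP al a ha; rewrite in_tree andbT.
  by move: (index_mem a s); rewrite ss ha.
- by move=> v i ik; rewrite !hf balanced // ik k0.
- move=> v i j x ij jk; rewrite !hf (ltn_trans ij jk) jk /=.
  apply: leq_add; first exact: dominated.
  case: (v == w) => //=.
  have hij : val (nth a0 s i) < val (nth a0 s j).
    have := sorted_ltn_nth ltn_trans (val a0) so.
    rewrite size_map ss -!(nth_map a0 (val a0)) ?ss ?(ltn_trans ij jk) //; apply => //.
    by rewrite inE (ltn_trans ij jk).
  by case: (leqP (val (nth a0 s j)) x) => //= h; rewrite (leq_trans hij h).
Qed.

Lemma firing_invariant_reachable k l (c : config k l) : 0 < k ->
  reachable c -> firing_invariant c.
Proof.
move=> k0 hr; suff gen x y : clos_refl_trans _ (@fire_step k l) x y ->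
    firing_invariant x -> firing_invariant y.
  exact: gen hr (firing_invariant_init k l).
by elim=> // [a b hab|a b d _ h1 _ h2 /h1 /h2] //; apply: firing_invariant_step.
Qed.

(** * Reachable stable configurations *)

Lemma card_count n (P : pred 'I_n) : #|[pred a | P a]| = count P (enum 'I_n).
Proof.
rewrite cardE size_filter /enum_mem count_filter.
by apply: eq_count => a; rewrite !inE andbT.
Qed.

Lemma count_enum_gt0 n (P : pred 'I_n) a : P a -> 0 < count P (enum 'I_n).
Proof. by move=> Pa; rewrite -has_count; apply/hasP; exists a; rewrite ?mem_enum. Qed.

Lemma sum_ord_eq1 k d : d < k -> \sum_(i < k) ((i : nat) == d : nat) = 1.
Proof.
move=> dk; rewrite (bigD1 (Ordinal dk)) //= eqxx big1 // => i.
by rewrite -val_eqE /=; case: eqP.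
Qed.

Lemma prefix_children k (v x : vertex) : all (fun d => d < k) x ->
  (prefix v x : nat) = (x == v) + \sum_(i < k) (prefix (rcons v i) x : nat).
Proof.
move=> ax; have [/prefixP[y exy]|pv] := boolP (prefix v x); last first.
  rewrite big1 => [|i _]; first by case: eqP pv => // ->; rewrite prefix_refl.
  by case p: (prefix _ _) => //; move: pv; rewrite (prefix_trans (prefix_rcons v i) p).
move: ax; rewrite exy all_cat => /andP[_ ay].
under eq_bigr => i _ do rewrite -cats1 prefix_catr //= eqxx /=.
case: y ay {exy} => [|d y] /=; first by rewrite cats0 eqxx big1 // => -[].
case/andP=> dk _; have -> : (v ++ d :: y == v) = false.
  by apply/negbTE/eqP => /(congr1 size); rewrite size_cat /=; lia.
by rewrite -(sum_ord_eq1 dk); apply: eq_bigr => i _; rewrite prefix0s andbT.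
Qed.

Lemma chip_labels_uniq N (P : pred 'I_N) : uniq [seq (val a).+1 | a <- enum 'I_N & P a].
Proof. by rewrite map_inj_uniq ?(filter_uniq _ (enum_uniq _)) // => a b [/val_inj]. Qed.

Lemma label_at_inj k l (c : config k l) a : injective c -> label_at c (c a) = (val a).+1.
Proof.
move=> c_inj; rewrite /label_at; case: pickP => [i /eqP /c_inj -> //|].
by move/(_ a); rewrite eqxx.
Qed.

Section StableConfigurations.

Variables (k l : nat) (c : config k l).

Definition subtree_size v := subtree_count c v xpredT.

Definition chips_at (v : vertex) := count (fun a => c a == v) (enum 'I_(k ^ l)).

Hypothesis inv : firing_invariant c.

Lemma subtree_size_split v : subtree_size v = chips_at v + k * subtree_size (rcons v 0).
Proof.
rewrite /subtree_size /chips_at.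
transitivity (\sum_(a <- enum 'I_(k ^ l))
   ((c a == v) + \sum_(i < k) (prefix (rcons v i) (c a) : nat))).
  rewrite /subtree_count count_sum; apply: eq_bigr => a _.
  by rewrite andbT (prefix_children _ (chips_in_tree inv a)).
rewrite big_split /= -count_sum exchange_big /= -[X in X * _]card_ord -sum_nat_const.
congr (_ + _); apply: eq_bigr => i _.
rewrite -(siblings_balanced inv v (ltn_ord i)) /subtree_count count_sum.
by apply: eq_bigr => a _; rewrite andbT.
Qed.

Hypothesis st : stable c.

Lemma chips_at_lt v : chips_at v < k.
Proof. by have := st v; rewrite card_count. Qed.

(* [chips_at v < k] makes [subtree_size_split] a base-[k] expansion. *)
Lemma subtree_size_children v n : subtree_size v = k ^ n.+1 ->
  chips_at v = 0 /\ forall i, i < k -> subtree_size (rcons v i) = k ^ n.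
Proof.
move=> hv; have := subtree_size_split v; rewrite hv expnS => e.
have k0 : 0 < k by case: k (chips_at_lt v).
have h0 : chips_at v = 0.
  move/(congr1 (modn^~ k)): e.
  by rewrite /= addnC [k * subtree_size _]mulnC modnMDl modnMr modn_small ?chips_at_lt.
split=> // i ik; rewrite /subtree_size (siblings_balanced inv v ik) -/(subtree_size _).
by move: e; rewrite h0 add0n => /eqP; rewrite eqn_mul2l (gtn_eqF k0) => /eqP ->.
Qed.

Lemma subtree_size_nil : subtree_size [::] = k ^ l.
Proof.
rewrite /subtree_size /subtree_count (eq_count (a2 := predT)) ?count_predT ?size_enum_ord //.
by move=> a; rewrite prefix0s.
Qed.

Lemma subtree_size_depth v : all (fun d => d < k) v -> size v <= l ->
  subtree_size v = k ^ (l - size v).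
Proof.
elim/last_ind: v => [|u i IH]; first by rewrite subn0 subtree_size_nil.
rewrite all_rcons size_rcons => /andP[ik au] ul.
have := IH au (ltnW ul); rewrite (_ : l - size u = (l - (size u).+1).+1); last by lia.
by case/subtree_size_children => _ ->.
Qed.

Lemma chips_at_inner v : all (fun d => d < k) v -> size v < l -> chips_at v = 0.
Proof.
move=> av vl; have := subtree_size_depth av (ltnW vl).
by rewrite (_ : l - size v = (l - (size v).+1).+1); [case/subtree_size_children | lia].
Qed.

Hypothesis k1 : 1 < k.

Lemma chip_depth a : size (c a) = l.
Proof.
have ca := chips_in_tree inv a.
case: (ltngtP (size (c a)) l) => // h.
  have := chips_at_inner ca h; rewrite /chips_at.
  by have := @count_enum_gt0 _ (fun b => c b == c a) a (eqxx _); lia.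
pose w := take l (c a); pose d := nth 0 (c a) l.
have sw : size w = l by rewrite size_take h.
have aw : all (fun d => d < k) w by apply/allP => e /mem_take /(allP ca).
have dk : d < k by apply: (allP ca); rewrite mem_nth.
have := subtree_size_split w; rewrite subtree_size_depth ?sw ?subnn //.
rewrite /subtree_size -(siblings_balanced inv w dk) -/(subtree_size _).
have : 0 < subtree_size (rcons w d).
  apply: (@count_enum_gt0 _ _ a); rewrite andbT /w /d -take_nth //.
  exact: prefix_take.
by lia.
Qed.

Lemma stable_config_inj : injective c.
Proof.
move=> a b eab; have : chips_at (c a) <= 1.
  have := subtree_size_split (c a).
  by rewrite subtree_size_depth ?chips_in_tree ?chip_depth ?subnn ?expn0 //; lia.
by rewrite /chips_at -card_count => /card_le1_eqP; apply; rewrite !inE ?eab.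
Qed.

Lemma stable_config_surj u : all (fun d => d < k) u -> size u = l -> exists a, c a = u.
Proof.
move=> au su; have : 0 < subtree_size u by rewrite subtree_size_depth ?su // expn_gt0; lia.
rewrite /subtree_size /subtree_count -has_count => /hasP[a _] /andP[pa _].
by exists a; move: pa; rewrite prefixE su -(chip_depth a) take_size => /eqP.
Qed.

Lemma label_at_chip a : label_at c (c a) = (val a).+1.
Proof. exact: label_at_inj stable_config_inj. Qed.

Definition subtree_reading v n :=
  mkseq (fun p => label_at c (v ++ layer_vertex k n p)) (k ^ n).

Lemma subtree_reading_perm v n : all (fun d => d < k) v -> size v + n = l ->
  perm_eq (subtree_reading v n)
    [seq (val a).+1 | a <- enum 'I_(k ^ l) & prefix v (c a)].
Proof.
move=> av svn; have k0 : 0 < k by lia.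
have chip_at p : exists a, c a = v ++ layer_vertex k n p.
  apply: stable_config_surj; rewrite ?all_cat ?av ?layer_vertex_digits_lt //.
  by rewrite size_cat layer_vertex_size.
apply: uniq_perm.
- rewrite /subtree_reading /mkseq map_inj_in_uniq ?iota_uniq // => p q.
  rewrite !mem_iota /= => hp hq; have [a ea] := chip_at p; have [b eb] := chip_at q.
  rewrite -ea -eb !label_at_chip => -[/val_inj eab].
  by move: eb; rewrite -eab ea => /eqP; rewrite eqseq_cat // eqxx => /eqP /layer_vertex_inj ->.
- exact: chip_labels_uniq.
move=> x; apply/idP/idP.
  case/mapP => p _ ->; have [a ea] := chip_at p; rewrite -ea label_at_chip.
  by apply: map_f; rewrite mem_filter mem_enum ea prefix_prefix.
case/mapP => a; rewrite mem_filter mem_enum andbT => /prefixP[y ey] ->.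
have ay : all (fun d => d < k) y by move: (chips_in_tree inv a); rewrite ey all_cat => /andP[].
have sy : size y = n.
  by move/eqP: svn; rewrite -(chip_depth a) ey size_cat eqn_add2l => /eqP.
have [p hp ep] := layer_vertex_surj k0 ay.
by apply/mapP; exists p; rewrite ?mem_iota -?sy // ep -ey label_at_chip.
Qed.

Lemma count_subtree_reading v n Q : all (fun d => d < k) v -> size v + n = l ->
  count Q (subtree_reading v n) = subtree_count c v (fun a => Q (val a).+1).
Proof.
move=> av svn; rewrite (permP (subtree_reading_perm av svn)) count_map count_filter.
by apply: eq_count => a; rewrite /= andbC.
Qed.

Lemma subtree_reading_flatten v n : subtree_reading v n.+1 =
  flatten [seq subtree_reading (rcons v i) n | i <- iota 0 k].
Proof.
have k0 : 0 < k by lia.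
rewrite /subtree_reading expnS mkseq_blocks; congr flatten.
apply/eq_in_map => i; rewrite mem_iota => /andP[_ ik].
apply/eq_in_map => r; rewrite mem_iota => /andP[_ rk] /=.
by rewrite layer_vertex_cons // cat_rcons.
Qed.

(* Domination turns into the hypothesis of [cross_le_bin2] for sibling readings. *)
Lemma invs_subtree_reading_le n v : all (fun d => d < k) v -> size v + n = l ->
  invs (subtree_reading v n) <= Z_inversions k n.
Proof.
elim: n v => [|n IH] v av svn; first by rewrite /subtree_reading expn0.
have avi i : i < k -> all (fun d => d < k) (rcons v i) by move=> ik; rewrite all_rcons ik av.
have svi i : size (rcons v i) + n = l by rewrite size_rcons addSnnS.
rewrite subtree_reading_flatten.
apply: leq_trans (invs_flatten_le (F := Z_inversions k n) (X := 'C(k ^ n, 2)) _ _) _.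
- by apply/allP => t /mapP[i]; rewrite mem_iota => /andP[_ ik] ->; exact: IH (avi i ik) (svi i).
- rewrite pairwise_map; apply: pairwise_iota_ltn => i j; rewrite !inE add0n => ik jk ij /=.
  apply: cross_le_bin2; rewrite ?size_mkseq //.
    by rewrite (perm_uniq (subtree_reading_perm (avi j jk) (svi j))) chip_labels_uniq.
  move=> [|x]; rewrite !count_subtree_reading ?avi //.
    by rewrite /subtree_count (eq_count (a2 := pred0)) ?count_pred0 // => a; rewrite andbF.
  exact: siblings_dominated.
by rewrite size_map size_iota.
Qed.

End StableConfigurations.

Lemma digits_config_inj k l : 0 < k -> injective (fun a : 'I_(k ^ l) => digits k l a).
Proof. by move=> k0 a b /(digits_inj k0 (ltn_ord a) (ltn_ord b)) /val_inj. Qed.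

Lemma stable_digits k l : 1 < k -> stable (fun a : 'I_(k ^ l) => digits k l a).
Proof.
move=> k1 v; apply: (@leq_ltn_trans 1) => //.
apply/card_le1_eqP => x y; rewrite !inE => /eqP hx /eqP hy.
by apply: (digits_config_inj (ltnW k1)); rewrite /= hx hy.
Qed.

Lemma perm_of_digits k l : 0 < k -> perm_of (fun a : 'I_(k ^ l) => digits k l a) = Z k l.
Proof.
move=> k0; apply/eq_in_map => p; rewrite mem_iota => /andP[_ hp].
rewrite -digits_rev_digits //.
exact: (label_at_inj (Ordinal (rev_digits_lt k0 hp)) (digits_config_inj k0)).
Qed.

Unset Implicit Arguments.
Set Strict Implicit.

Theorem theorem6p1 (k l : nat) (hk : 2 <= k) :
  (exists c : config k l, [/\ reachable c, stable c & perm_of c = Z k l]) /\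
  (forall c : config k l, reachable c -> stable c ->
     inversions (perm_of c) <= inversions (Z k l)) /\
  ((inversions (Z k l))%:R : rat)%R =
    ((k%:R ^+ (2 * l) - l%:R * k%:R ^+ l.+1 + (l%:R - 1) * k%:R ^+ l) / 4
      : rat)%R.
Proof.
have k0 : 0 < k by lia.
have invZ : inversions (Z k l) = Z_inversions k l.
  have -> : Z k l = map succn (rev_digits_seq k l) by rewrite /Z /rev_digits_seq /mkseq -map_comp.
  by rewrite inversions_invs invs_map ?invs_rev_digits_seq.
split; [|split].
- exists (fun a => digits k l a); split.
  + exact: reachable_digits.
  + exact: stable_digits.
  + exact: perm_of_digits.
- move=> c hr st; rewrite invZ inversions_invs.
  exact: (invs_subtree_reading_le (firing_invariant_reachable k0 hr) st hk (v := [::])).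
- rewrite invZ; apply: (@mulIf _ 4) => //.
  by rewrite Z_inversions_closed_form divfK // mulnC exprM !exprSr.
Qed.
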